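(* For every function $g_1:\mathbb{N}\to\mathbb{N}$ there exists a function $g_2:\mathbb{N}\to\mathbb{N}$ with $g_2\ge g_1$ such that the following holds. Let $H=(V,E)$ be a graph of cutwidth $\mathrm{cw}(H)$, let $F\subseteq V$ be a set of initially burned vertices with $|F|\le g_1(\mathrm{cw}(H))$, and let the budget be any $b\ge 1$. Then there is a protection strategy for the firefighter process on $H$ started from the burned set $F$ such that at most $g_2(\mathrm{cw}(H))$ vertices are burned at the end of the process.
   Context: Firefighter process with initial burned set $F$: at step $t=0$ all vertices of $F$ are burned. At every step $t>0$: (1) protection phase: at most $b$ vertices not yet burned become protected; (2) spreading phase: every unprotected vertex adjacent to a burned vertex becomes burned. Burned and protected vertices stay so; the process stops when no new vertex can become burned. The cutwidth $\mathrm{cw}(G)$ of a graph $G$ on $n$ vertices is the minimum $k$ such that there is an ordering $v_1,\dots,v_n$ of its vertices with at most $k$ edges between $\{v_1,\dots,v_i\}$ and $\{v_{i+1},\dots,v_n\}$ for every $i\in\{1,\dots,n-1\}$. *)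

From mathcomp Require Import all_boot all_fingroup.
Set Implicit Arguments. Unset Strict Implicit. Unset Printing Implicit Defensive.

Section Graphs.
Variables (T : finType) (e : rel T).

(* A (finite simple) graph is a symmetric irreflexive relation e on a finType T.
   A vertex ordering v_1,...,v_n is given by a permutation p of T:
   the sequence [seq p x | x <- enum T]. *)
Definition vorder (p : {perm T}) : seq T := [seq p x | x <- enum T].

(* number of edges between the first i vertices and the rest
   (each edge counted once, as the ordered pair (left end, right end)) *)
Definition cut_size (p : {perm T}) (i : nat) : nat :=
  #|[set uv : T * T | [&& e uv.1 uv.2, uv.1 \in take i (vorder p)
                        & uv.2 \in drop i (vorder p)]]|.

Definition order_width (p : {perm T}) : nat :=
  \max_(i < #|T|) cut_size p i.

Definition cutwidth : nat :=
  \big[minn/order_width 1%g]_(p : {perm T}) order_width p.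

(* Firefighter process. A strategy P gives, for each step t > 0, the set P t
   of vertices protected at step t. State at time t: (burned, protected). *)
Fixpoint ff_state (F : {set T}) (P : nat -> {set T}) (t : nat)
  : {set T} * {set T} :=
  match t with
  | 0 => (F, set0)
  | t'.+1 =>
      let st := ff_state F P t' in
      let Pr := st.2 :|: P t'.+1 in
      (st.1 :|: [set v | (v \notin Pr) && [exists u in st.1, e u v]], Pr)
  end.

Definition burned (F : {set T}) (P : nat -> {set T}) (t : nat) : {set T} :=
  (ff_state F P t).1.

Definition valid_strategy (F : {set T}) (b : nat) (P : nat -> {set T}) : Prop :=
  forall t, P t.+1 \subset ~: burned F P t /\ #|P t.+1| <= b.

End Graphs.

From mathcomp Require Import all_boot all_fingroup.
Set Implicit Arguments. Unset Strict Implicit. Unset Printing Implicit Defensive.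

(* Fix a vertex ordering p of width at most c.  By induction on c we show that
   a fire started from at most k vertices can be held, with any budget b >= 1, to at
   most [fire_bound c k] burned vertices (predicate [contained]).
   - Width 0: the only edges are loops, so the fire never spreads.
   - Width c+1: let r = 4k(c+1) and let [spread] be the set the fire would
     reach in r steps without protection.  Closed neighbourhoods have at most
     4(c+1)+1 vertices, so |spread| is bounded in terms of c and k.  The ball
     reached from a source f spans an interval of positions; the vertices
     outside [spread] incident to an edge crossing one of the two boundary
     cuts of a span form the [fence], of size at most r.  Protecting one fence
     vertex per step during the first r steps keeps the fire inside
     [spread], and afterwards inside the spans minus the fence.  There the
     fire behaves like a fire started at [spread] in the [residual] graph,
     which forgets edges inside [spread]; every cut inside a span is crossed by
     such a forgotten edge of a ball, so the residual graph has width at most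
     c and the induction hypothesis supplies the rest of the strategy. *)

Section Orderings.
Variables (T : finType) (e : rel T).

Lemma cutwidth_attained : exists p, cutwidth e = order_width e p.
Proof.
apply: (big_ind (fun w => exists p, w = order_width e p)) => [|_ _ [p ->] [q ->]|p _].
- by exists 1%g.
- by case: (leqP (order_width e p) (order_width e q)); [exists p | exists q].
- by exists p.
Qed.

Variable p : {perm T}.

Definition pos (v : T) : nat := index v (vorder p).

Lemma mem_vorder v : v \in vorder p.
Proof. by rewrite -[v](permKV p); apply: map_f; rewrite mem_enum. Qed.

Lemma uniq_vorder : uniq (vorder p).
Proof. by rewrite map_inj_uniq ?enum_uniq //; apply: perm_inj. Qed.

Lemma pos_inj : injective pos.
Proof.
by move=> u v eq_uv; rewrite -(nth_index u (mem_vorder u)) [index _ _]eq_uv nth_index ?mem_vorder.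
Qed.

Lemma pos_lt_card v : pos v < #|T|.
Proof. by rewrite cardE -(size_map p) index_mem mem_vorder. Qed.

Lemma in_take_pos v i : (v \in take i (vorder p)) = (pos v < i).
Proof. by rewrite in_take // mem_vorder. Qed.

Lemma in_drop_pos v i : (v \in drop i (vorder p)) = (i <= pos v).
Proof.
have disj : {in drop i (vorder p), forall x, x \notin take i (vorder p)}.
  by move: uniq_vorder; rewrite -{1}(cat_take_drop i (vorder p)) cat_uniq => /and3P[_ /hasPn].
move: (mem_vorder v); rewrite -{1}(cat_take_drop i (vorder p)) mem_cat in_take_pos.
case: ltnP => [lt_vi _ | //].
by apply/negbTE/negP => /disj; rewrite in_take_pos lt_vi.
Qed.

Definition crosses (i : nat) (u v : T) : bool := (pos u < i) && (i <= pos v).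

Definition crossing (i : nat) : {set T * T} :=
  [set uv | e uv.1 uv.2 && crosses i uv.1 uv.2].

Lemma cut_sizeE i : cut_size e p i = #|crossing i|.
Proof. by apply: eq_card => uv; rewrite !inE in_take_pos in_drop_pos. Qed.

Lemma cut_size_le_width i : cut_size e p i <= order_width e p.
Proof.
case: (ltnP i #|T|) => [lt_iT | le_Ti].
  exact: (leq_bigmax (F := fun j : 'I_#|T| => cut_size e p j) (Ordinal lt_iT)).
rewrite cut_sizeE (_ : crossing i = set0) ?cards0 //.
apply/setP => uv; rewrite !inE; apply/negP => /and3P[_ _ le_iv].
by have := leq_trans (pos_lt_card uv.2) (leq_trans le_Ti le_iv); rewrite ltnn.
Qed.

Definition cut_ends (i : nat) : {set T} :=
  [set w | [exists z, e w z && (crosses i w z || crosses i z w)]].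

Hypothesis sym : symmetric e.

Lemma card_cut_ends i : #|cut_ends i| <= 2 * cut_size e p i.
Proof.
have sub : cut_ends i \subset fst @: crossing i :|: snd @: crossing i.
  apply/subsetP => w; rewrite inE => /existsP[z /andP[ewz /orP[cr | cr]]].
    by rewrite inE (imset_f fst (_ : (w, z) \in crossing i)) // inE ewz.
  by rewrite inE (imset_f snd (_ : (z, w) \in crossing i)) ?orbT // inE sym ewz.
rewrite cut_sizeE mul2n -addnn; apply: leq_trans (subset_leq_card sub) _.
by apply: leq_trans (leq_card_setU _ _) _; rewrite leq_add ?leq_imset_card.
Qed.

(* The neighbours of u are endpoints of edges crossing the cuts just left and
   just right of u, so bounded width bounds degrees. *)
Lemma card_closed_nbhd w u :
  (forall i, cut_size e p i <= w) -> #|u |: [set v | e u v]| <= (4 * w).+1.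
Proof.
move=> width_w.
have sub : u |: [set v | e u v] \subset u |: (cut_ends (pos u).+1 :|: cut_ends (pos u)).
  apply/subsetP => v; rewrite !inE => /orP[-> // | euv].
  apply/orP; case: (ltngtP (pos u) (pos v)) => [lt_uv | lt_vu | /pos_inj ->]; last by left.
  - by right; apply/orP; left; apply/existsP; exists u; rewrite sym euv /crosses lt_uv ltnSn orbT.
  - by right; apply/orP; right; apply/existsP; exists u; rewrite sym euv /crosses lt_vu leqnn.
apply: leq_trans (subset_leq_card sub) _.
rewrite cardsU1 -[(4 * w).+1]add1n leq_add ?leq_b1 // (_ : 4 = 2 + 2) // mulnDl.
apply: leq_trans (leq_card_setU _ _) _.
by apply: leq_add; apply: leq_trans (card_cut_ends _) _; rewrite leq_mul2l width_w orbT.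
Qed.
End Orderings.

Lemma card_bigcup_le (T I : finType) (A : {pred I}) (G : I -> {set T}) :
  #|\bigcup_(i in A) G i| <= \sum_(i in A) #|G i|.
Proof.
elim/big_rec2: _ => [|i U n _ IH]; first by rewrite cards0.
exact: leq_trans (leq_card_setU _ _) (leq_add _ IH).
Qed.

Section Process.
Variable T : finType.
Implicit Types (e : rel T) (F A : {set T}) (P : nat -> {set T}).

Definition protected e F P t : {set T} := (ff_state e F P t).2.

Lemma protectedS e F P t : protected e F P t.+1 = protected e F P t :|: P t.+1.
Proof. by []. Qed.

Lemma burnedS e F P t : burned e F P t.+1 = burned e F P t :|:
  [set v | (v \notin protected e F P t.+1) && [exists u in burned e F P t, e u v]].
Proof. by []. Qed.

Lemma burned_mono e F P m n : m <= n -> burned e F P m \subset burned e F P n.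
Proof.
move=> /subnK <-; elim: (n - m) => [|d IH] //.
by apply: subset_trans IH _; rewrite addSn burnedS subsetUl.
Qed.

Lemma protected_mono e F P m n : m <= n -> protected e F P m \subset protected e F P n.
Proof.
move=> /subnK <-; elim: (n - m) => [|d IH] //.
by apply: subset_trans IH _; rewrite addSn protectedS subsetUl.
Qed.

Lemma sources_burned e F P t : F \subset burned e F P t.
Proof. exact: (burned_mono _ _ _ (leq0n t)). Qed.

Definition no_protection : nat -> {set T} := fun=> set0.

(* [reach e F t]: vertices at distance at most t from F, i.e. the fire of an
   idle firefighter. *)
Definition reach e F t : {set T} := burned e F no_protection t.

Lemma reachS e F t x :
  (x \in reach e F t.+1) = (x \in reach e F t) || [exists u in reach e F t, e u x].
Proof.
have no_prot n : protected e F no_protection n = set0.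
  by elim: n => [|n IH] //; rewrite protectedS IH setU0.
by rewrite /reach burnedS no_prot !inE.
Qed.

Lemma burned_sub_reach e F P t : burned e F P t \subset reach e F t.
Proof.
elim: t => [|t IH] //; apply/subsetP => x.
rewrite burnedS reachS !inE => /orP[/(subsetP IH) -> // | /andP[_ /existsP[u /andP[bu eux]]]].
by apply/orP; right; apply/existsP; exists u; rewrite (subsetP IH u bu).
Qed.

Lemma reach_subset e F1 F2 t : F1 \subset F2 -> reach e F1 t \subset reach e F2 t.
Proof.
move=> sub12; elim: t => [|t IH] //; apply/subsetP => x.
rewrite !reachS => /orP[/(subsetP IH) -> // | /existsP[u /andP[ru eux]]].
by apply/orP; right; apply/existsP; exists u; rewrite (subsetP IH u ru).
Qed.

Lemma reach_source e F t x :
  x \in reach e F t -> exists2 f, f \in F & x \in reach e [set f] t.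
Proof.
elim: t x => [|t IH] x; first by exists x; rewrite // inE.
rewrite reachS => /orP[/IH[f fF rx] | /existsP[u /andP[/IH[f fF ru] eux]]].
  by exists f; rewrite // reachS rx.
by exists f; rewrite // reachS; apply/orP; right; apply/existsP; exists u; rewrite ru.
Qed.

(* The ball around f is connected: if f satisfies L and some vertex x of the
   ball does not, an edge of the ball leaves L. *)
Lemma reach_cross_from_source e f t (L : pred T) x :
  L f -> x \in reach e [set f] t -> ~~ L x ->
  exists u v, [/\ u \in reach e [set f] t, v \in reach e [set f] t, e u v, L u & ~~ L v].
Proof.
move=> Lf; elim: t x => [|t IH] x.
  by rewrite inE => /eqP ->; rewrite Lf.
have grow : reach e [set f] t \subset reach e [set f] t.+1 by apply: burned_mono.
move=> rx nLx; move: (rx); rewrite reachS => /orP[rx' | /existsP[u /andP[ru eux]]].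
  by have [u [v [ru rv euv Lu nLv]]] := IH x rx' nLx; exists u, v; rewrite !(subsetP grow).
case Lu: (L u); first by exists u, x; rewrite (subsetP grow).
by have [u' [v [ru' rv euv Lu' nLv]]] := IH u ru (negbT Lu); exists u', v; rewrite !(subsetP grow).
Qed.

Lemma reach_cross e f t (L : pred T) a b : symmetric e ->
  a \in reach e [set f] t -> b \in reach e [set f] t -> L a -> ~~ L b ->
  exists u v, [/\ u \in reach e [set f] t, v \in reach e [set f] t, e u v, L u & ~~ L v].
Proof.
move=> sym ra rb La nLb; case Lf: (L f); first exact: reach_cross_from_source rb nLb.
have nCa : ~~ (predC L) a by rewrite /= La.
have [u [v [ru rv euv nLu]]] := reach_cross_from_source (negbT Lf) ra nCa.
by rewrite /= negbK => Lv; exists v, u; rewrite sym.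
Qed.

Lemma card_reach e F d : (forall u, #|u |: [set v | e u v]| <= d) ->
  forall t, #|reach e F t| <= #|F| * d ^ t.
Proof.
move=> nbhd_d; elim=> [|t IH]; first by rewrite muln1.
have sub : reach e F t.+1 \subset \bigcup_(u in reach e F t) (u |: [set v | e u v]).
  apply/subsetP => x; rewrite reachS => /orP[rx | /existsP[u /andP[ru eux]]].
    by apply/bigcupP; exists x; rewrite // !inE eqxx.
  by apply/bigcupP; exists u; rewrite // !inE eux orbT.
apply: leq_trans (subset_leq_card sub) _; apply: leq_trans (card_bigcup_le _ _) _.
apply: (@leq_trans (\sum_(u in reach e F t) d)); first exact: leq_sum.
by rewrite sum_nat_const expnS mulnCA mulnC leq_mul2l IH orbT.
Qed.

Lemma burned_confined e F P A s :
  burned e F P s \subset A ->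
  (forall u v, u \in A -> e u v -> v \notin A -> v \in protected e F P s) ->
  forall n, burned e F P (s + n) \subset A.
Proof.
move=> init fenced; elim=> [|n IH]; first by rewrite addn0.
apply/subsetP => v; rewrite addnS burnedS !inE => /orP[/(subsetP IH) // |].
case/andP=> unprot /existsP[u /andP[bu euv]]; apply: contraNT unprot => nAv.
have prot_s := fenced u v (subsetP IH u bu) euv nAv.
by rewrite -addnS (subsetP (protected_mono _ _ _ (leq_addr _ _)) v prot_s).
Qed.

Lemma burned_simulated e e' F F' P P' s :
  burned e F P s \subset F' ->
  (forall t, P' t.+1 \subset P (s + t.+1)) ->
  (forall t u v, u \in burned e F P (s + t) -> e u v ->
     v \notin protected e F P (s + t.+1) -> e' u v || (v \in F')) ->
  forall t, burned e F P (s + t) \subset burned e' F' P' t.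
Proof.
move=> init protP' along_e' t.
suff [] : burned e F P (s + t) \subset burned e' F' P' t /\
          protected e' F' P' t \subset protected e F P (s + t) by [].
elim: t => [|t [IHb IHp]]; first by rewrite addn0 sub0set.
have protS : protected e' F' P' t.+1 \subset protected e F P (s + t.+1).
  by rewrite !protectedS addnS setUSS // -addnS.
have grow := subsetP (burned_mono e' F' P' (leqnSn t)).
split=> //; apply/subsetP => v; rewrite addnS burnedS.
case/setUP=> [/(subsetP IHb) /grow // |]; rewrite inE -addnS.
case/andP=> unprot /existsP[u /andP[bu euv]].
have [/grow // | nbv] := boolP (v \in burned e' F' P' t).
case/orP: (along_e' t u v bu euv unprot) => [e'uv | F'v].
  2: exact: subsetP (sources_burned _ _ _ _) v F'v.
rewrite burnedS in_setU inE; apply/orP; right; apply/andP; split.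
  by apply: contra unprot => /(subsetP protS).
by apply/existsP; exists u; rewrite e'uv (subsetP IHb u bu).
Qed.

End Process.

Section Schedule.
Variables (T : finType) (S : {set T}).

Definition schedule (n : nat) : {set T} := [set x in S | index x (enum S) == n.-1].

Lemma schedule_sub n : schedule n \subset S.
Proof. by apply/subsetP => x; rewrite inE => /andP[]. Qed.

Lemma card_schedule n : #|schedule n| <= 1.
Proof.
apply/card_le1_eqP => x y; rewrite !inE => /andP[Sx /eqP ix] /andP[Sy /eqP iy].
by rewrite -(nth_index x (_ : y \in enum S)) ?mem_enum // iy -ix nth_index ?mem_enum.
Qed.

Lemma scheduled x : x \in S -> exists2 n, 0 < n <= #|S| & x \in schedule n.
Proof.
move=> Sx; exists (index x (enum S)).+1; last by rewrite inE Sx /=.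
by rewrite cardE index_mem mem_enum.
Qed.

End Schedule.

Section InductionStep.
Variables (c k : nat) (T : finType) (e : rel T) (p : {perm T}) (F : {set T}) (b : nat).
Hypotheses (sym : symmetric e) (width_e : forall i, cut_size e p i <= c.+1)
  (card_F : #|F| <= k) (b_pos : 0 < b).

(* Length of the first phase, an upper bound for the size of the fence. *)
Definition first_phase : nat := k * (4 * c.+1).

Definition spread : {set T} := reach e F first_phase.
Definition ball (f : T) : {set T} := reach e [set f] first_phase.

Definition spread_bound : nat := k * (4 * c.+1).+1 ^ first_phase.

Lemma card_spread : #|spread| <= spread_bound.
Proof.
apply: leq_trans (card_reach F (fun u => card_closed_nbhd sym u width_e) first_phase) _.
by rewrite leq_mul2r card_F orbT.
Qed.

Lemma ball_center f : f \in ball f.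
Proof. by rewrite (subsetP (sources_burned _ _ _ _)) ?inE. Qed.

Definition leftmost (f : T) : T := [arg min_(a < f in ball f) pos p a].
Definition rightmost (f : T) : T := [arg max_(a > f in ball f) pos p a].

Lemma leftmost_in f : leftmost f \in ball f.
Proof. by rewrite /leftmost; case: arg_minnP => //; apply: ball_center. Qed.

Lemma leftmost_le f a : a \in ball f -> pos p (leftmost f) <= pos p a.
Proof.
by rewrite /leftmost; case: arg_minnP => [|m _ min_m]; [apply: ball_center | apply: min_m].
Qed.

Lemma rightmost_in f : rightmost f \in ball f.
Proof. by rewrite /rightmost; case: arg_maxnP => //; apply: ball_center. Qed.

Lemma rightmost_ge f a : a \in ball f -> pos p a <= pos p (rightmost f).
Proof.
by rewrite /rightmost; case: arg_maxnP => [|m _ max_m]; [apply: ball_center | apply: max_m].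
Qed.

Definition in_span (f v : T) : bool :=
  (pos p (leftmost f) <= pos p v) && (pos p v <= pos p (rightmost f)).

Definition spanned (v : T) : bool := [exists f in F, in_span f v].

Definition fence : {set T} :=
  ~: spread :&: \bigcup_(f in F)
     (cut_ends e p (pos p (leftmost f)) :|: cut_ends e p (pos p (rightmost f)).+1).

(* The graph the fire sees after the first phase: edges between spanned
   vertices off the fence, except edges inside [spread]. *)
Definition residual : rel T := fun u v =>
  [&& e u v, (u \notin fence) && (v \notin fence),
      ~~ ((u \in spread) && (v \in spread)) & spanned u && spanned v].

Lemma spread_spanned v : v \in spread -> spanned v.
Proof.
case/reach_source => f Ff bv; apply/existsP; exists f.
by rewrite Ff /in_span leftmost_le // rightmost_ge.
Qed.

Lemma fence_outside v : v \in fence -> v \notin spread.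
Proof. by rewrite !inE => /andP[]. Qed.

Lemma card_fence : #|fence| <= first_phase.
Proof.
rewrite /fence; apply: leq_trans (subset_leq_card (subsetIr _ _)) _.
apply: leq_trans (card_bigcup_le _ _) _.
apply: (@leq_trans (\sum_(f in F) 4 * c.+1)).
  apply: leq_sum => f _; apply: leq_trans (leq_card_setU _ _) _.
  rewrite (_ : 4 = 2 + 2) // mulnDl.
  by apply: leq_add; apply: leq_trans (card_cut_ends p sym _) _; rewrite leq_mul2l width_e orbT.
by rewrite sum_nat_const leq_mul2r card_F orbT.
Qed.

Lemma exit_span u v : spanned u -> e u v -> ~~ spanned v -> v \in fence.
Proof.
case/existsP => f /andP[Ff /andP[le_lu le_ur]] euv not_spanned_v.
have out_v : (pos p v < pos p (leftmost f)) || (pos p (rightmost f) < pos p v).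
  by move/existsPn/(_ f): not_spanned_v; rewrite Ff /in_span /= negb_and -!ltnNge.
rewrite !inE (contra (@spread_spanned v)) //=; apply/bigcupP; exists f => //.
rewrite !inE; apply/orP; case/orP: out_v => [lt_vl | lt_rv].
  by left; apply/existsP; exists u; rewrite sym euv /crosses lt_vl le_lu.
right; apply/existsP; exists u; rewrite sym euv /=.
by apply/orP; right; rewrite /crosses ltnS le_ur.
Qed.

Lemma residual_sym : symmetric residual.
Proof. by move=> u v; rewrite /residual sym; congr [&& _, _, _ & _]; rewrite andbC. Qed.

Lemma ball_sub_spread f : f \in F -> ball f \subset spread.
Proof. by move=> Ff; apply: reach_subset; rewrite sub1set. Qed.

(* A cut inside a span is crossed by an edge of the ball, which the residual
   graph forgets. *)
Lemma residual_cut_inside f i : f \in F ->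
  pos p (leftmost f) < i <= pos p (rightmost f) -> cut_size residual p i <= c.
Proof.
move=> Ff /andP[lt_li le_ir].
have [|u [v [bu bv euv lt_ui not_lt_vi]]] := reach_cross (L := fun x => pos p x < i)
  sym (leftmost_in f) (rightmost_in f) lt_li; first by rewrite -leqNgt.
have sub : crossing residual p i \proper crossing e p i.
  apply/properP; split.
    by apply/subsetP => -[x y]; rewrite !inE /= => /andP[/andP[-> _] ->].
  exists (u, v); first by rewrite inE /= euv /crosses lt_ui leqNgt not_lt_vi.
  by rewrite inE /= /residual !(subsetP (ball_sub_spread Ff)) //= !andbF.
by rewrite -ltnS cut_sizeE (leq_trans (proper_card sub)) // -cut_sizeE.
Qed.

(* A residual edge crossing a cut outside every span would cross the right
   boundary of a span, putting its endpoint outside [spread] on the fence. *)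
Lemma residual_cut_outside i :
  (forall f, f \in F -> ~~ (pos p (leftmost f) < i <= pos p (rightmost f))) ->
  cut_size residual p i = 0.
Proof.
move=> outside; rewrite cut_sizeE; apply/eqP; rewrite cards_eq0.
apply/eqP/setP => -[u v]; rewrite !inE /=.
apply/negP => /andP[/and4P[euv /andP[nfu nfv] not_both /andP[su _]] cr_uv].
case/existsP: su => f /andP[Ff /andP[le_lu le_ur]].
have cr : crosses p (pos p (rightmost f)).+1 u v.
  move: (outside f Ff) cr_uv; rewrite /crosses => /nandP[not_lt_li /andP[lt_ui _] | ].
    by rewrite (leq_ltn_trans le_lu lt_ui) in not_lt_li.
  by move=> not_le_ir /andP[_ le_iv]; rewrite ltnS le_ur (leq_trans _ le_iv) // ltnNge.
have fence_end w : w \notin spread -> w \in cut_ends e p (pos p (rightmost f)).+1 -> w \in fence.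
  by move=> nsw endw; rewrite !inE nsw /=; apply/bigcupP; exists f; rewrite // in_setU endw orbT.
case/nandP: not_both => [nsu | nsv].
  by move: nfu; rewrite fence_end // inE; apply/existsP; exists v; rewrite euv cr.
by move: nfv; rewrite fence_end // inE; apply/existsP; exists u; rewrite sym euv cr orbT.
Qed.

Lemma residual_width i : cut_size residual p i <= c.
Proof.
have [/existsP[f /andP[Ff inside]] | /existsPn outside] :=
  boolP [exists f in F, pos p (leftmost f) < i <= pos p (rightmost f)].
  exact: residual_cut_inside Ff inside.
by rewrite residual_cut_outside // => f Ff; move: (outside f); rewrite Ff.
Qed.

Section CombinedStrategy.
Variable P' : nat -> {set T}.
Hypothesis P'_valid : valid_strategy residual spread b P'.

Definition combined (n : nat) : {set T} :=
  if n <= first_phase then schedule fence n else P' (n - first_phase).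

Lemma combined_late t : combined (first_phase + t.+1) = P' t.+1.
Proof. by rewrite /combined -{2}[first_phase]addn0 leq_add2l /= addKn. Qed.

Lemma burned_first_phase n : n <= first_phase -> burned e F combined n \subset spread.
Proof. by move=> le_n; apply: subset_trans (burned_sub_reach _ _ _ _) (burned_mono _ _ _ le_n). Qed.

Lemma fence_protected : fence \subset protected e F combined first_phase.
Proof.
apply/subsetP => x /scheduled[[|n] // /andP[_ le_n] sched_x].
have le_phase : n.+1 <= first_phase := leq_trans le_n card_fence.
apply: (subsetP (protected_mono _ _ _ le_phase)).
by rewrite protectedS /combined le_phase inE sched_x orbT.
Qed.

Lemma burned_late_confined t :
  burned e F combined (first_phase + t) \subset [set v | spanned v & v \notin fence].
Proof.
apply: burned_confined => [|u v].
  apply/subsetP => v /(subsetP (burned_first_phase (leqnn _))) sv.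
  rewrite in_set spread_spanned //=; apply: contraL sv; apply: fence_outside.
rewrite in_set => /andP[su _] euv; rewrite in_set negb_and negbK.
by case/orP=> [/(exit_span su euv) |] fv; apply: (subsetP fence_protected).
Qed.

Lemma burned_late_simulated t :
  burned e F combined (first_phase + t) \subset burned residual spread P' t.
Proof.
apply: burned_simulated => [|{}t|{}t u v bu euv unprot].
- exact: burned_first_phase.
- by rewrite combined_late.
have nfv : v \notin fence.
  apply: contra unprot => /(subsetP fence_protected).
  by apply: (subsetP (protected_mono _ _ _ _)); rewrite leq_addr.
have := subsetP (burned_late_confined t) u bu.
rewrite in_set => /andP[su nfu].
have sv : spanned v.
  by case: (boolP (spanned v)) => // /(exit_span su euv) fv; rewrite fv in nfv.
apply/orP; have [sp_v | nsp_v] := boolP (v \in spread); [by right | left].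
by rewrite /residual euv nfu nfv su sv /= andbT; apply/nandP; right.
Qed.

Lemma combined_valid : valid_strategy e F b combined.
Proof.
move=> t; case: (leqP t.+1 first_phase) => [early | late].
  rewrite /combined early; split; last exact: leq_trans (card_schedule _ _) b_pos.
  apply/subsetP => x /(subsetP (schedule_sub _ _)) /fence_outside; rewrite inE.
  by apply: contra; apply: (subsetP (burned_first_phase (ltnW early))).
have [t' ->] : exists t', t = first_phase + t' by exists (t - first_phase); rewrite subnKC.
rewrite -addnS combined_late; have [avoid budget] := P'_valid t'; split => //.
by apply: subset_trans avoid _; rewrite setCS burned_late_simulated.
Qed.

End CombinedStrategy.

End InductionStep.

Definition contained (c : nat) (N : nat -> nat) : Prop :=
  forall k (T : finType) (e : rel T) (p : {perm T}) (F : {set T}) (b : nat),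
  symmetric e -> (forall i, cut_size e p i <= c) -> #|F| <= k -> 0 < b ->
  exists P, valid_strategy e F b P /\ forall t, #|burned e F P t| <= N k.

Fixpoint fire_bound (c k : nat) : nat :=
  if c is c'.+1 then maxn (spread_bound c' k) (fire_bound c' (spread_bound c' k)) else k.

Lemma contained_width0 : contained 0 (fire_bound 0).
Proof.
move=> k T e p F b sym width0 card_F _; exists (@no_protection T); split.
  by move=> t; rewrite sub0set cards0.
have loop u v : e u v -> v = u.
  move=> euv; apply: (card_le1_eqP (card_closed_nbhd sym u width0));
  by rewrite !inE ?eqxx ?euv ?orbT.
move=> t; apply: leq_trans card_F; apply: subset_leq_card.
by apply: (burned_confined (s := 0)) => // u v Fu /loop ->; rewrite Fu.
Qed.

Lemma contained_step c : contained c (fire_bound c) -> contained c.+1 (fire_bound c.+1).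
Proof.
move=> IH k T e p F b sym width card_F b_pos.
have [P' [P'_valid P'_bound]] := IH _ T _ p _ b (residual_sym c k p F sym)
  (residual_width k F sym width) (card_spread sym width card_F) b_pos.
exists (combined c k e p F P'); split; first exact: combined_valid.
move=> n; case: (leqP n (first_phase c k)) => [early | late].
  apply: leq_trans (subset_leq_card (burned_first_phase e p F P' early)) _.
  exact: leq_trans (card_spread sym width card_F) (leq_maxl _ _).
have [t ->] : exists t, n = first_phase c k + t.
  by exists (n - first_phase c k); rewrite subnKC // ltnW.
apply: leq_trans (subset_leq_card (burned_late_simulated sym width card_F P' t)) _.
exact: leq_trans (P'_bound t) (leq_maxr _ _).
Qed.

Lemma contained_all c : contained c (fire_bound c).
Proof. by elim: c => [|c IH]; [exact: contained_width0 | exact: contained_step]. Qed.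

Theorem mainTheorem5 :
  forall g1 : nat -> nat,
  exists g2 : nat -> nat,
    (forall n, g1 n <= g2 n) /\
    forall (T : finType) (e : rel T),
      symmetric e -> irreflexive e ->
      forall (F : {set T}) (b : nat),
        #|F| <= g1 (cutwidth e) -> 1 <= b ->
        exists P : nat -> {set T},
          valid_strategy e F b P /\
          forall t, #|burned e F P t| <= g2 (cutwidth e).
Proof.
move=> g1; exists (fun n => maxn (g1 n) (fire_bound n (g1 n))).
split=> [n | T e sym _ F b card_F b_pos]; first exact: leq_maxl.
have [p width_p] := cutwidth_attained e.
have width : forall i, cut_size e p i <= cutwidth e.
  by move=> i; rewrite width_p cut_size_le_width.
have [P [P_valid P_bound]] := contained_all sym width card_F b_pos.
by exists P; split=> // t; apply: leq_trans (P_bound t) (leq_maxr _ _).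
Qed.
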